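(* Let $\sigma$ be a monotone function on $(0,\infty)$ with $\sigma(y)\nearrow\infty$, and let $F$ be an entire function with $|F(x+iy)|\le e^{|y|\sigma(|y|)}$ for all $x+iy\in\mathbb{C}$. If $F$ has $n$ zeros on an interval $[a,b]$, then $$|F(x)|\le (b-a)^n\min_{y>0}\frac{e^{y\sigma(y)}}{y^n}\quad\text{for every } x\in[a,b].$$ *)

From Stdlib Require Import Reals.
From Coquelicot Require Import Coquelicot.
Open Scope R_scope.

Definition entire (F : C -> C) : Prop :=
  forall z : C, @ex_derive C_AbsRing C_NormedModule F z.

Fixpoint prod_lin (x : nat -> R) (n : nat) (z : C) : C :=
  match n with
  | O => 1%C
  | S m => Cmult (prod_lin x m z) (Cminus z (RtoC (x m)))
  end.

(* F has the n zeros x 0, ..., x (n-1) (listed with multiplicity, i.e.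
   a point repeated k times is a zero of order >= k): F factors as
   G(z) * prod_{i<n} (z - x i) with G entire. *)
Definition has_zeros (F : C -> C) (x : nat -> R) (n : nat) : Prop :=
  exists G : C -> C, entire G /\ forall z : C, F z = Cmult (G z) (prod_lin x n z).

From Stdlib Require Import Reals Lra Lia.
From Coquelicot Require Import Coquelicot.
Open Scope R_scope.

(* Write F = G * prod_i (z - x_i) with G entire.  On the lines Im z = +-y the
   product has modulus at least y^n, so |G| <= e^(y sigma(y)) / y^n there, and on
   the strip |Im z| <= y at distance at least 1 from [a, b] it has modulus at
   least 1, so G is bounded there.  The Phragmen-Lindelof argument (the maximum
   principle for G(w) / (1 - i eps (w - t)) on long rectangles, then eps -> 0) carries
   the bound on the two lines over to the point t, and |prod_i (t - x_i)| <= (b - a)^n.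
   The maximum principle on rectangles follows from Goursat's theorem, Cauchy's
   formula with Im (contour integral of dw / (w - t)) > 0, and Landau's trick of
   applying the resulting estimate to the powers f^k. *)

Lemma le_0_of_forall_le_eps_mul (X K : R) : (forall eps, 0 < eps -> X <= eps * K) -> X <= 0.
Proof.
  intros H. apply Rle_plus_epsilon. intros eps Heps. rewrite Rplus_0_l.
  pose proof (Rabs_pos K). pose proof (Rle_abs K).
  assert (Hq : 0 < eps / (Rabs K + 1)) by (apply Rdiv_lt_0_compat; lra).
  eapply Rle_trans; [apply (H _ Hq)|].
  apply Rle_trans with (eps / (Rabs K + 1) * (Rabs K + 1)); [nra|].
  right. field. lra.
Qed.

Lemma exists_mul_pow_half_lt (c d : R) : 0 < d -> exists k, c * (/ 2) ^ k < d.
Proof.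
  intros Hd. pose proof (Rabs_pos c).
  destruct (pow_lt_1_zero (/ 2) ltac:(rewrite Rabs_right; lra) (d / (Rabs c + 1)))
    as [k Hk]; [apply Rdiv_lt_0_compat; lra|].
  exists k. specialize (Hk k (Nat.le_refl k)).
  assert (Hq : 0 < (/ 2) ^ k) by (apply pow_lt; lra).
  rewrite Rabs_right in Hk by lra.
  apply Rle_lt_trans with (Rabs c * (/ 2) ^ k); [apply Rmult_le_compat_r; [lra | apply Rle_abs]|].
  apply Rmult_lt_compat_r with (r := Rabs c + 1) in Hk; [|lra].
  replace (d / (Rabs c + 1) * (Rabs c + 1)) with d in Hk by (field; lra).
  nra.
Qed.

Lemma le_of_forall_pow_le_mul_pow (a K M : R) : 0 <= a -> 0 <= K ->
  (forall k, a ^ k <= M * K ^ k) -> a <= K.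
Proof.
  intros Ha HK H. destruct (Rle_dec a K) as [Hle|Hgt]; [exact Hle|]. exfalso.
  assert (HM : 1 <= M) by (specialize (H O); simpl in H; lra).
  assert (Hr : Rabs (K / a) < 1).
  { rewrite Rabs_right by (apply Rle_ge, Rdiv_le_0_compat; lra).
    apply (proj1 (Rdiv_lt_1 K a ltac:(lra))); lra. }
  destruct (pow_lt_1_zero (K / a) Hr (/ M)) as [k Hk]; [apply Rinv_0_lt_compat; lra|].
  specialize (Hk k (Nat.le_refl k)). specialize (H k).
  assert (Hak : 0 < a ^ k) by (apply pow_lt; lra).
  rewrite Rabs_right in Hk by (apply Rle_ge, pow_le, Rdiv_le_0_compat; lra).
  unfold Rdiv in Hk. rewrite Rpow_mult_distr, pow_inv in Hk.
  apply Rmult_lt_compat_r with (r := M * a ^ k) in Hk; [|nra].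
  replace (K ^ k * / a ^ k * (M * a ^ k)) with (M * K ^ k) in Hk by (field; lra).
  replace (/ M * (M * a ^ k)) with (a ^ k) in Hk by (field; lra).
  lra.
Qed.

Lemma nested_intervals (lo hi : nat -> R) :
  (forall k j, lo k <= hi j) -> exists p, forall k, lo k <= p <= hi k.
Proof.
  intros H.
  destruct (completeness (fun z => exists k, z = lo k)) as [p [Hub Hlub]].
  - exists (hi O). intros z [k ->]. apply H.
  - exists (lo O), O. reflexivity.
  - exists p. intros k. split.
    + apply Hub. exists k. reflexivity.
    + apply Hlub. intros z [j ->]. apply H.
Qed.

Lemma Cmod_le_Rabs_Re_Im (z : C) : Cmod z <= Rabs (Re z) + Rabs (Im z).
Proof.
  destruct z as [u v]. unfold Cmod; simpl.
  pose proof (Rabs_pos u); pose proof (Rabs_pos v).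
  rewrite <- (sqrt_pow2 (Rabs u + Rabs v)) by lra.
  apply sqrt_le_1_alt.
  replace (u * (u * 1) + v * (v * 1)) with (Rabs u * Rabs u + Rabs v * Rabs v)
    by (rewrite <- !Rabs_mult, !Rabs_right by nra; ring).
  nra.
Qed.

Lemma Rabs_Im_le_Cmod (z : C) : Rabs (Im z) <= Cmod z.
Proof. eapply Rle_trans; [apply Rmax_r | apply Rmax_Cmod]. Qed.

Lemma Cmod_div_le (g d : C) (c M : R) :
  0 < c -> c <= Cmod d -> Cmod g <= M -> Cmod (g * / d)%C <= M / c.
Proof.
  intros Hc Hd Hg.
  assert (Hd0 : d <> 0%C) by (intro E; rewrite E, Cmod_0 in Hd; lra).
  rewrite Cmod_mult, Cmod_inv by exact Hd0.
  apply Rmult_le_compat; [apply Cmod_ge_0 | apply Rlt_le, Rinv_0_lt_compat; lra | exact Hg |].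
  apply Rinv_le_contravar; lra.
Qed.

(** * Holomorphic functions *)

Definition holomorphic (f : C -> C) (z : C) : Prop :=
  @ex_derive C_AbsRing C_NormedModule f z.

Definition C_continuous (f : C -> C) (z : C) : Prop :=
  @continuous (AbsRing_UniformSpace C_AbsRing)
    (NormedModule.UniformSpace C_AbsRing C_NormedModule) f z.

Lemma holomorphic_continuous (f : C -> C) (z : C) :
  holomorphic f z -> C_continuous f z.
Proof. apply ex_derive_continuous. Qed.

Lemma C_continuous_minus (f g : C -> C) (z : C) :
  C_continuous f z -> C_continuous g z -> C_continuous (fun w => f w - g w)%C z.
Proof. apply (continuous_minus (U:=AbsRing_UniformSpace C_AbsRing) (V:=C_NormedModule)). Qed.

(* Coquelicot equips C with two normed C-module structures; they differ only
   in the form of the linearity proof. *)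
Lemma is_derive_C_modules (f : C -> C) (z l : C) :
  @is_derive C_AbsRing (AbsRing_NormedModule C_AbsRing) f z l <->
  @is_derive C_AbsRing C_NormedModule f z l.
Proof. split; intros [_ H]; (split; [apply is_linear_scal_l | exact H]). Qed.

Lemma holomorphic_const (c z : C) : holomorphic (fun _ => c) z.
Proof. exists zero. apply (is_derive_const (K:=C_AbsRing) (V:=C_NormedModule)). Qed.

Lemma holomorphic_id (z : C) : holomorphic (fun w => w) z.
Proof. exists one. apply is_derive_C_modules, (is_derive_id (K:=C_AbsRing)). Qed.

Lemma holomorphic_plus (f g : C -> C) (z : C) :
  holomorphic f z -> holomorphic g z -> holomorphic (fun w => f w + g w)%C z.
Proof.
  intros [df Hf] [dg Hg]. exists (plus df dg).
  exact (is_derive_plus (K:=C_AbsRing) (V:=C_NormedModule) f g z df dg Hf Hg).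
Qed.

Lemma holomorphic_minus (f g : C -> C) (z : C) :
  holomorphic f z -> holomorphic g z -> holomorphic (fun w => f w - g w)%C z.
Proof.
  intros [df Hf] [dg Hg]. exists (minus df dg).
  exact (is_derive_minus (K:=C_AbsRing) (V:=C_NormedModule) f g z df dg Hf Hg).
Qed.

Lemma holomorphic_mult (f g : C -> C) (z : C) :
  holomorphic f z -> holomorphic g z -> holomorphic (fun w => f w * g w)%C z.
Proof.
  intros [df Hf] [dg Hg]. eexists. apply is_derive_C_modules.
  apply (is_derive_mult (K:=C_AbsRing) f g z df dg);
    [apply is_derive_C_modules, Hf | apply is_derive_C_modules, Hg | apply Cmult_comm].
Qed.

Lemma holomorphic_pow (f : C -> C) (k : nat) (z : C) :
  holomorphic f z -> holomorphic (fun w => Cpow (f w) k) z.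
Proof.
  intros Hf. induction k as [|k IH]; simpl.
  - apply holomorphic_const.
  - apply holomorphic_mult; assumption.
Qed.

Lemma holomorphic_comp (f g : C -> C) (z : C) :
  holomorphic g z -> holomorphic f (g z) -> holomorphic (fun w => f (g w)) z.
Proof.
  intros [dg Hg] [df Hf]. eexists.
  apply (is_derive_comp (K:=C_AbsRing) (V:=C_NormedModule) f g z df dg Hf).
  apply is_derive_C_modules, Hg.
Qed.

(* 1/w - 1/z + (w - z)/z^2 = (w - z)^2 / (w z^2), and |w| >= |z|/2 near z. *)
Lemma holomorphic_Cinv (z : C) : z <> 0%C -> holomorphic (fun w => / w)%C z.
Proof.
  intros Hz. exists (- / (z * z))%C. split; [apply is_linear_scal_l|].
  intros x Hx.
  apply (is_filter_lim_locally_unique (K:=C_AbsRing) (V:=AbsRing_NormedModule C_AbsRing)) in Hx.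
  subst x. intros eps.
  assert (Hm : 0 < Cmod z) by (apply Cmod_gt_0; exact Hz).
  set (m := Cmod z) in *.
  assert (He := cond_pos eps).
  assert (Hd : 0 < Rmin (m / 2) (eps * (m * m * m) / 2)).
  { apply Rmin_glb_lt; [lra|]. apply Rmult_lt_0_compat; [|lra].
    apply Rmult_lt_0_compat; [lra|]. repeat apply Rmult_lt_0_compat; lra. }
  exists (mkposreal _ Hd). intros w Hw.
  change (Cmod (w - z)%C < Rmin (m / 2) (eps * (m * m * m) / 2)) in Hw.
  set (r := Cmod (w - z)%C) in *.
  assert (Hr1 : r < m / 2) by (eapply Rlt_le_trans; [exact Hw | apply Rmin_l]).
  assert (Hr2 : r < eps * (m * m * m) / 2) by (eapply Rlt_le_trans; [exact Hw | apply Rmin_r]).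
  assert (Hr0 : 0 <= r) by apply Cmod_ge_0.
  assert (Hwm : m - r <= Cmod w).
  { unfold m. replace z with (w - (w - z))%C at 1 by ring.
    pose proof (Cmod_triangle w (- (w - z))%C) as T. rewrite Cmod_opp in T.
    unfold Cminus at 1. fold r in T. lra. }
  assert (Hw0 : (w : C) <> 0%C) by (intros E; rewrite E, Cmod_0 in Hwm; lra).
  change (Cmod (minus (minus (/ w) (/ z)) (scal (minus w z) (- / (z * z))))%C
          <= eps * Cmod (minus w z)).
  replace (minus (minus (/ w) (/ z)) (scal (minus w z) (- / (z * z))))%C
    with ((w - z) * (w - z) / (w * (z * z)))%C
    by (unfold minus, plus, opp, scal; simpl; unfold mult; simpl; field; split; assumption).
  change (minus w z) with (w - z)%C. fold r.
  rewrite Cmod_div by (apply Cmult_neq_0; [exact Hw0 | apply Cmult_neq_0; exact Hz]).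
  rewrite !Cmod_mult. fold r m.
  apply Rle_div_l; [apply Rmult_lt_0_compat; [lra | apply Rmult_lt_0_compat; lra]|].
  assert (r * r <= r * (eps * (m * m * m) / 2)) by (apply Rmult_le_compat_l; lra).
  assert (eps * (m * m * m) / 2 <= eps * (Cmod w * (m * m))).
  { replace (eps * (m * m * m) / 2) with (eps * ((m / 2) * (m * m))) by field.
    apply Rmult_le_compat_l; [lra|]. apply Rmult_le_compat_r; [nra | lra]. }
  nra.
Qed.

Lemma holomorphic_affine (c l p z : C) : holomorphic (fun w => c + l * (w - p))%C z.
Proof.
  apply holomorphic_plus; [apply holomorphic_const|].
  apply holomorphic_mult; [apply holomorphic_const|].
  apply holomorphic_minus; [apply holomorphic_id | apply holomorphic_const].
Qed.

Lemma holomorphic_Cauchy_kernel (p z : C) : z <> p -> holomorphic (fun w => / (w - p))%C z.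
Proof.
  intros Hz.
  apply (holomorphic_comp (fun w => / w)%C (fun w => w - p)%C).
  - apply holomorphic_minus; [apply holomorphic_id | apply holomorphic_const].
  - apply holomorphic_Cinv, Cminus_eq_contra, Hz.
Qed.

Lemma holomorphic_linear_approx (f : C -> C) (p : C) :
  holomorphic f p -> exists l : C, forall eps, 0 < eps -> exists d, 0 < d /\
    forall w, Cmod (w - p)%C < d -> Cmod (f w - f p - l * (w - p))%C <= eps * Cmod (w - p)%C.
Proof.
  intros [l [_ Hd]]. exists l. intros eps Heps.
  destruct (Hd p (fun P H => H) (mkposreal eps Heps)) as [d Hd'].
  exists d. split; [apply cond_pos|]. intros w Hw.
  specialize (Hd' w Hw). simpl in Hd'.
  change (Cmod (minus (minus (f w) (f p)) (scal (minus w p) l)) <= eps * Cmod (minus w p)) in Hd'.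
  replace (f w - f p - l * (w - p))%C with (minus (minus (f w) (f p)) (scal (minus w p) l))
    by (unfold minus, plus, opp, scal; simpl; unfold mult; simpl; ring).
  exact Hd'.
Qed.

(** * Integrals along segments *)

Notation CR := C_R_CompleteNormedModule.

Lemma norm_C_R (z : C) : @norm R_AbsRing C_R_NormedModule z = Cmod z.
Proof.
  destruct z as [u v]. change (sqrt (Rabs u ^ 2 + Rabs v ^ 2) = Cmod (u, v)).
  unfold Cmod; simpl fst; simpl snd. rewrite !pow2_abs. reflexivity.
Qed.

Lemma continuous_hslice (f : C -> C) (s y : R) :
  C_continuous f (s, y) -> @continuous R_UniformSpace CR (fun u => f (u, y)) s.
Proof.
  intros Hf. apply filterlim_locally. intros eps.
  destruct (proj1 (filterlim_locally f (f _)) Hf eps) as [d Hd].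
  exists d. intros u Hu. apply Hd.
  change (Cmod ((u, y) - (s, y))%C < d).
  replace ((u, y) - (s, y))%C with (RtoC (u - s)) by (apply injective_projections; simpl; ring).
  rewrite Cmod_R. exact Hu.
Qed.

Lemma continuous_vslice (f : C -> C) (x s : R) :
  C_continuous f (x, s) -> @continuous R_UniformSpace CR (fun v => f (x, v)) s.
Proof.
  intros Hf. apply filterlim_locally. intros eps.
  destruct (proj1 (filterlim_locally f (f _)) Hf eps) as [d Hd].
  exists d. intros v Hv. apply Hd.
  change (Cmod ((x, v) - (x, s))%C < d).
  replace ((x, v) - (x, s))%C with (Ci * RtoC (v - s))%C
    by (apply injective_projections; simpl; ring).
  rewrite Cmod_mult, Cmod_Ci, Cmod_R, Rmult_1_l. exact Hv.
Qed.

Lemma ex_RInt_continuous_C (g : R -> C) (a b : R) : a <= b ->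
  (forall s, a <= s <= b -> @continuous R_UniformSpace CR g s) -> ex_RInt (V:=CR) g a b.
Proof. intros Hab Hc. apply ex_RInt_continuous. rewrite Rmin_left, Rmax_right by lra. exact Hc. Qed.

Lemma is_RInt_Cmult (g : R -> C) (a b : R) (c l : C) :
  is_RInt (V:=CR) g a b l -> is_RInt (V:=CR) (fun s => c * g s)%C a b (c * l)%C.
Proof.
  intros H. destruct c as [c1 c2], l as [l1 l2].
  pose proof (is_RInt_fct_extend_fst (U:=R_NormedModule) (V:=R_NormedModule) g a b _ H) as H1.
  pose proof (is_RInt_fct_extend_snd (U:=R_NormedModule) (V:=R_NormedModule) g a b _ H) as H2.
  simpl in H1, H2.
  apply (is_RInt_fct_extend_pair (U:=R_NormedModule) (V:=R_NormedModule)); simpl.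
  - apply (is_RInt_minus (V:=R_NormedModule) (fun s => c1 * fst (g s)) (fun s => c2 * snd (g s)));
      apply (is_RInt_scal (V:=R_NormedModule)); assumption.
  - apply (is_RInt_plus (V:=R_NormedModule) (fun s => c1 * snd (g s)) (fun s => c2 * fst (g s)));
      apply (is_RInt_scal (V:=R_NormedModule)); assumption.
Qed.

Lemma RInt_Cmult (g : R -> C) (a b : R) (c : C) : ex_RInt (V:=CR) g a b ->
  RInt (V:=CR) (fun s => c * g s)%C a b = (c * RInt (V:=CR) g a b)%C.
Proof. intros H. apply is_RInt_unique, is_RInt_Cmult, RInt_correct, H. Qed.

Lemma RInt_Cminus (g h : R -> C) (a b : R) : ex_RInt (V:=CR) g a b -> ex_RInt (V:=CR) h a b ->
  RInt (V:=CR) (fun s => g s - h s)%C a b = (RInt (V:=CR) g a b - RInt (V:=CR) h a b)%C.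
Proof. apply (RInt_minus (V:=CR)). Qed.

Lemma is_RInt_Cconst (a b : R) (c : C) :
  is_RInt (V:=CR) (fun _ => c) a b (RtoC (b - a) * c)%C.
Proof.
  replace (RtoC (b - a) * c)%C with (scal (V:=C_R_NormedModule) (b - a) c).
  - apply is_RInt_const.
  - destruct c. unfold scal; simpl. unfold prod_scal, scal; simpl; unfold mult; simpl.
    apply injective_projections; simpl; ring.
Qed.

Lemma is_RInt_RtoC (a b : R) :
  is_RInt (V:=CR) (fun s => RtoC s) a b (RtoC ((b * b - a * a) / 2)).
Proof.
  apply (is_RInt_fct_extend_pair (U:=R_NormedModule) (V:=R_NormedModule)); simpl.
  - replace ((b * b - a * a) / 2) with (minus (b * b / 2) (a * a / 2))
      by (unfold minus, plus, opp; simpl; field).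
    apply (is_RInt_derive (V:=R_CompleteNormedModule) (fun s => s * s / 2) (fun s => s)).
    + intros s _. auto_derive; [exact I | field].
    + intros s _. apply continuous_id.
  - pose proof (is_RInt_const (V:=R_NormedModule) a b 0) as H.
    unfold scal in H; simpl in H; unfold mult in H; simpl in H.
    rewrite Rmult_0_r in H. exact H.
Qed.

Lemma Cmod_RInt_le (g : R -> C) (a b M : R) : a <= b -> ex_RInt (V:=CR) g a b ->
  (forall s, a <= s <= b -> Cmod (g s) <= M) -> Cmod (RInt (V:=CR) g a b) <= (b - a) * M.
Proof.
  intros Hab Hex Hb. rewrite <- norm_C_R.
  apply (norm_RInt_le (V:=CR) g (fun _ => M) a b); [exact Hab | | apply RInt_correct, Hex |].
  - intros s Hs. rewrite norm_C_R. apply Hb, Hs.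
  - apply (is_RInt_const (V:=R_NormedModule)).
Qed.

Lemma RInt_C_Re_pos (g : R -> C) (a b c : R) : a < b ->
  (forall s, a <= s <= b -> @continuous R_UniformSpace CR g s) ->
  (forall s, a < s < b -> 0 < c * Re (g s)) -> 0 < c * Re (RInt (V:=CR) g a b).
Proof.
  intros Hab Hc Hp.
  replace (c * Re (RInt (V:=CR) g a b)) with (RInt (fun s => c * Re (g s)) a b).
  - apply RInt_gt_0; [exact Hab | exact Hp |]. intros s Hs.
    apply (continuous_mult (K:=R_AbsRing) (fun _ => c) (fun s => fst (g s)));
      [apply continuous_const |].
    apply (continuous_comp g fst); [apply Hc; lra | destruct (g s); apply continuous_fst].
  - apply (is_RInt_unique (V:=R_CompleteNormedModule)).
    apply (is_RInt_scal (V:=R_NormedModule) (fun s => fst (g s))).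
    apply (is_RInt_fct_extend_fst (U:=R_NormedModule) (V:=R_NormedModule)).
    apply (RInt_correct (V:=CR)), ex_RInt_continuous_C; [lra | exact Hc].
Qed.

Lemma RInt_C_Im_pos (g : R -> C) (a b c : R) : a < b ->
  (forall s, a <= s <= b -> @continuous R_UniformSpace CR g s) ->
  (forall s, a < s < b -> 0 < c * Im (g s)) -> 0 < c * Im (RInt (V:=CR) g a b).
Proof.
  intros Hab Hc Hp.
  replace (c * Im (RInt (V:=CR) g a b)) with (RInt (fun s => c * Im (g s)) a b).
  - apply RInt_gt_0; [exact Hab | exact Hp |]. intros s Hs.
    apply (continuous_mult (K:=R_AbsRing) (fun _ => c) (fun s => snd (g s)));
      [apply continuous_const |].
    apply (continuous_comp g snd); [apply Hc; lra | destruct (g s); apply continuous_snd].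
  - apply (is_RInt_unique (V:=R_CompleteNormedModule)).
    apply (is_RInt_scal (V:=R_NormedModule) (fun s => snd (g s))).
    apply (is_RInt_fct_extend_snd (U:=R_NormedModule) (V:=R_NormedModule)).
    apply (RInt_correct (V:=CR)), ex_RInt_continuous_C; [lra | exact Hc].
Qed.

(** * Contour integrals over rectangles *)

Definition on_rect (P : C -> Prop) (x0 x1 y0 y1 : R) : Prop :=
  forall u v, x0 <= u <= x1 -> y0 <= v <= y1 -> P (u, v).

Definition on_rect_boundary (P : C -> Prop) (x0 x1 y0 y1 : R) : Prop :=
  (forall u, x0 <= u <= x1 -> P (u, y0) /\ P (u, y1)) /\
  (forall v, y0 <= v <= y1 -> P (x0, v) /\ P (x1, v)).

Lemma on_rect_impl (P Q : C -> Prop) (x0 x1 y0 y1 : R) :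
  (forall w, P w -> Q w) -> on_rect P x0 x1 y0 y1 -> on_rect Q x0 x1 y0 y1.
Proof. intros HPQ H u v Hu Hv. apply HPQ, H; assumption. Qed.

Lemma on_rect_boundary_impl (P Q : C -> Prop) (x0 x1 y0 y1 : R) :
  (forall w, P w -> Q w) -> on_rect_boundary P x0 x1 y0 y1 -> on_rect_boundary Q x0 x1 y0 y1.
Proof.
  intros HPQ [Hh Hv]. split; intros s Hs;
    [destruct (Hh s Hs) | destruct (Hv s Hs)]; split; apply HPQ; assumption.
Qed.

Lemma on_rect_boundary_conj (P Q : C -> Prop) (x0 x1 y0 y1 : R) :
  on_rect_boundary P x0 x1 y0 y1 -> on_rect_boundary Q x0 x1 y0 y1 ->
  on_rect_boundary (fun w => P w /\ Q w) x0 x1 y0 y1.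
Proof.
  intros [HPh HPv] [HQh HQv].
  split; intros s Hs; [destruct (HPh s Hs), (HQh s Hs) | destruct (HPv s Hs), (HQv s Hs)]; tauto.
Qed.

Lemma on_rect_sub (P : C -> Prop) (x0 x1 y0 y1 a0 a1 b0 b1 : R) :
  x0 <= a0 -> a1 <= x1 -> y0 <= b0 -> b1 <= y1 ->
  on_rect P x0 x1 y0 y1 -> on_rect P a0 a1 b0 b1.
Proof. intros ? ? ? ? H u v Hu Hv. apply H; lra. Qed.

Lemma on_rect_boundary_sub (P : C -> Prop) (x0 x1 y0 y1 a0 a1 b0 b1 : R) :
  x0 <= a0 <= a1 -> a1 <= x1 -> y0 <= b0 <= b1 -> b1 <= y1 ->
  on_rect P x0 x1 y0 y1 -> on_rect_boundary P a0 a1 b0 b1.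
Proof. intros ? ? ? ? H. split; intros s Hs; split; apply H; lra. Qed.

Lemma on_rect_boundary_avoiding (P : C -> Prop) (t : C) (x0 x1 y0 y1 a0 a1 b0 b1 : R) :
  x0 <= a0 <= a1 -> a1 <= x1 -> y0 <= b0 <= b1 -> b1 <= y1 ->
  Re t <> a0 -> Re t <> a1 -> Im t <> b0 -> Im t <> b1 ->
  on_rect (fun w => w <> t -> P w) x0 x1 y0 y1 -> on_rect_boundary P a0 a1 b0 b1.
Proof.
  intros ? ? ? ? H0 H1 H2 H3 H.
  split; intros s Hs; split; apply H; try lra; intros <-; simpl in *; lra.
Qed.

Lemma on_rect_avoiding (P : C -> Prop) (t : C) (x0 x1 y0 y1 a0 a1 b0 b1 : R) :
  x0 <= a0 -> a1 <= x1 -> y0 <= b0 -> b1 <= y1 ->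
  Re t < a0 \/ a1 < Re t \/ Im t < b0 \/ b1 < Im t ->
  on_rect (fun w => w <> t -> P w) x0 x1 y0 y1 -> on_rect P a0 a1 b0 b1.
Proof. intros ? ? ? ? Ht H u v Hu Hv. apply H; try lra. intros <-. simpl in Ht. lra. Qed.

Definition hseg_integral (f : C -> C) (y x0 x1 : R) : C :=
  RInt (V:=CR) (fun u => f (u, y)) x0 x1.

Definition vseg_integral (f : C -> C) (x y0 y1 : R) : C :=
  RInt (V:=CR) (fun v => f (x, v)) y0 y1.

(* The counterclockwise contour integral over the boundary of [x0, x1] x [y0, y1];
   dw = i dv on the vertical sides. *)
Definition rect_integral (f : C -> C) (x0 x1 y0 y1 : R) : C :=
  (hseg_integral f y0 x0 x1 + Ci * vseg_integral f x1 y0 y1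
   - hseg_integral f y1 x0 x1 - Ci * vseg_integral f x0 y0 y1)%C.

Lemma Cmod_rect_combination_le (a b c d : C) :
  Cmod (a + Ci * b - c - Ci * d)%C <= Cmod a + Cmod b + Cmod c + Cmod d.
Proof.
  unfold Cminus.
  eapply Rle_trans; [apply Cmod_triangle|]. rewrite Cmod_opp.
  eapply Rle_trans; [apply Rplus_le_compat_r, Cmod_triangle|]. rewrite Cmod_opp.
  eapply Rle_trans; [apply Rplus_le_compat_r, Rplus_le_compat_r, Cmod_triangle|].
  rewrite !Cmod_mult, Cmod_Ci. lra.
Qed.

Section RectSides.

Variables (f : C -> C) (x0 x1 y0 y1 : R).
Hypotheses (Hx : x0 <= x1) (Hy : y0 <= y1).
Hypothesis Hcont : on_rect_boundary (C_continuous f) x0 x1 y0 y1.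

Lemma ex_RInt_bottom : ex_RInt (V:=CR) (fun u => f (u, y0)) x0 x1.
Proof.
  apply ex_RInt_continuous_C; [exact Hx|]. intros s Hs.
  apply continuous_hslice, (proj1 Hcont s Hs).
Qed.

Lemma ex_RInt_top : ex_RInt (V:=CR) (fun u => f (u, y1)) x0 x1.
Proof.
  apply ex_RInt_continuous_C; [exact Hx|]. intros s Hs.
  apply continuous_hslice, (proj1 Hcont s Hs).
Qed.

Lemma ex_RInt_left : ex_RInt (V:=CR) (fun v => f (x0, v)) y0 y1.
Proof.
  apply ex_RInt_continuous_C; [exact Hy|]. intros s Hs.
  apply continuous_vslice, (proj2 Hcont s Hs).
Qed.

Lemma ex_RInt_right : ex_RInt (V:=CR) (fun v => f (x1, v)) y0 y1.
Proof.
  apply ex_RInt_continuous_C; [exact Hy|]. intros s Hs.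
  apply continuous_vslice, (proj2 Hcont s Hs).
Qed.

Lemma rect_integral_Cmult (c : C) :
  rect_integral (fun w => c * f w)%C x0 x1 y0 y1 = (c * rect_integral f x0 x1 y0 y1)%C.
Proof.
  unfold rect_integral, hseg_integral, vseg_integral.
  rewrite (RInt_Cmult _ _ _ c ex_RInt_bottom), (RInt_Cmult _ _ _ c ex_RInt_top),
    (RInt_Cmult _ _ _ c ex_RInt_left), (RInt_Cmult _ _ _ c ex_RInt_right).
  ring.
Qed.

Lemma Cmod_rect_integral_le (M : R) :
  on_rect_boundary (fun w => Cmod (f w) <= M) x0 x1 y0 y1 ->
  Cmod (rect_integral f x0 x1 y0 y1) <= 2 * (x1 - x0) * M + 2 * (y1 - y0) * M.
Proof.
  intros [Bh Bv]. unfold rect_integral, hseg_integral, vseg_integral.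
  assert (Hb : Cmod (RInt (V:=CR) (fun u => f (u, y0)) x0 x1) <= (x1 - x0) * M)
    by (apply Cmod_RInt_le; [exact Hx | exact ex_RInt_bottom | intros u Hu; apply (Bh u Hu)]).
  assert (Ht : Cmod (RInt (V:=CR) (fun u => f (u, y1)) x0 x1) <= (x1 - x0) * M)
    by (apply Cmod_RInt_le; [exact Hx | exact ex_RInt_top | intros u Hu; apply (Bh u Hu)]).
  assert (Hl : Cmod (RInt (V:=CR) (fun v => f (x0, v)) y0 y1) <= (y1 - y0) * M)
    by (apply Cmod_RInt_le; [exact Hy | exact ex_RInt_left | intros v Hv; apply (Bv v Hv)]).
  assert (Hr : Cmod (RInt (V:=CR) (fun v => f (x1, v)) y0 y1) <= (y1 - y0) * M)
    by (apply Cmod_RInt_le; [exact Hy | exact ex_RInt_right | intros v Hv; apply (Bv v Hv)]).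
  eapply Rle_trans; [apply Cmod_rect_combination_le | lra].
Qed.

End RectSides.

Lemma rect_integral_minus (f g : C -> C) (x0 x1 y0 y1 : R) : x0 <= x1 -> y0 <= y1 ->
  on_rect_boundary (C_continuous f) x0 x1 y0 y1 -> on_rect_boundary (C_continuous g) x0 x1 y0 y1 ->
  rect_integral (fun w => f w - g w)%C x0 x1 y0 y1
  = (rect_integral f x0 x1 y0 y1 - rect_integral g x0 x1 y0 y1)%C.
Proof.
  intros Hx Hy Hf Hg. unfold rect_integral, hseg_integral, vseg_integral.
  rewrite (RInt_Cminus _ _ _ _ (ex_RInt_bottom f _ _ _ _ Hx Hf) (ex_RInt_bottom g _ _ _ _ Hx Hg)),
    (RInt_Cminus _ _ _ _ (ex_RInt_top f _ _ _ _ Hx Hf) (ex_RInt_top g _ _ _ _ Hx Hg)),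
    (RInt_Cminus _ _ _ _ (ex_RInt_left f _ _ _ _ Hy Hf) (ex_RInt_left g _ _ _ _ Hy Hg)),
    (RInt_Cminus _ _ _ _ (ex_RInt_right f _ _ _ _ Hy Hf) (ex_RInt_right g _ _ _ _ Hy Hg)).
  ring.
Qed.

Lemma rect_integral_splitX (f : C -> C) (x0 xm x1 y0 y1 : R) :
  x0 <= xm <= x1 -> y0 <= y1 ->
  on_rect_boundary (C_continuous f) x0 xm y0 y1 -> on_rect_boundary (C_continuous f) xm x1 y0 y1 ->
  rect_integral f x0 x1 y0 y1 = (rect_integral f x0 xm y0 y1 + rect_integral f xm x1 y0 y1)%C.
Proof.
  intros Hx Hy Hl Hr. unfold rect_integral, hseg_integral.
  rewrite <- (RInt_Chasles (V:=CR) (fun u => f (u, y0)) x0 xm x1),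
    <- (RInt_Chasles (V:=CR) (fun u => f (u, y1)) x0 xm x1).
  - change (@plus CR) with Cplus. ring.
  - apply (ex_RInt_top f x0 xm y0 y1); [lra | exact Hl].
  - apply (ex_RInt_top f xm x1 y0 y1); [lra | exact Hr].
  - apply (ex_RInt_bottom f x0 xm y0 y1); [lra | exact Hl].
  - apply (ex_RInt_bottom f xm x1 y0 y1); [lra | exact Hr].
Qed.

Lemma rect_integral_splitY (f : C -> C) (x0 x1 y0 ym y1 : R) :
  x0 <= x1 -> y0 <= ym <= y1 ->
  on_rect_boundary (C_continuous f) x0 x1 y0 ym -> on_rect_boundary (C_continuous f) x0 x1 ym y1 ->
  rect_integral f x0 x1 y0 y1 = (rect_integral f x0 x1 y0 ym + rect_integral f x0 x1 ym y1)%C.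
Proof.
  intros Hx Hy Hl Hr. unfold rect_integral, vseg_integral.
  rewrite <- (RInt_Chasles (V:=CR) (fun v => f (x0, v)) y0 ym y1),
    <- (RInt_Chasles (V:=CR) (fun v => f (x1, v)) y0 ym y1).
  - change (@plus CR) with Cplus. ring.
  - apply (ex_RInt_right f x0 x1 y0 ym); [lra | exact Hl].
  - apply (ex_RInt_right f x0 x1 ym y1); [lra | exact Hr].
  - apply (ex_RInt_left f x0 x1 y0 ym); [lra | exact Hl].
  - apply (ex_RInt_left f x0 x1 ym y1); [lra | exact Hr].
Qed.

Lemma rect_integral_quarters (f : C -> C) (x0 x1 y0 y1 : R) :
  x0 <= x1 -> y0 <= y1 -> on_rect (C_continuous f) x0 x1 y0 y1 ->
  let xm := (x0 + x1) / 2 in let ym := (y0 + y1) / 2 in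
  rect_integral f x0 x1 y0 y1 =
  (rect_integral f x0 xm y0 ym + rect_integral f xm x1 y0 ym +
   rect_integral f x0 xm ym y1 + rect_integral f xm x1 ym y1)%C.
Proof.
  intros Hx Hy H xm ym.
  rewrite (rect_integral_splitX f x0 xm x1 y0 y1),
    (rect_integral_splitY f x0 xm y0 ym y1), (rect_integral_splitY f xm x1 y0 ym y1).
  - ring.
  all: unfold xm, ym in *; try lra; apply (on_rect_boundary_sub _ x0 x1 y0 y1); try lra; exact H.
Qed.

Lemma pair_as_RtoC (u v : R) : ((u, v) : C) = (RtoC u + Ci * RtoC v)%C.
Proof. apply injective_projections; simpl; ring. Qed.

Lemma hseg_integral_affine (c l p : C) (y x0 x1 : R) :
  hseg_integral (fun w => c + l * (w - p))%C y x0 x1 =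
  (RtoC (x1 - x0) * (c + l * (Ci * RtoC y - p)) + l * RtoC ((x1 * x1 - x0 * x0) / 2))%C.
Proof.
  apply (is_RInt_unique (V:=CR)).
  apply (is_RInt_ext (fun s => (c + l * (Ci * RtoC y - p)) + l * RtoC s)%C).
  - intros s _. rewrite pair_as_RtoC. change (@eq C (c + l * (Ci * RtoC y - p) + l * RtoC s)%C
      (c + l * (RtoC s + Ci * RtoC y - p))%C). ring.
  - apply (is_RInt_plus (V:=CR)); [apply is_RInt_Cconst | apply is_RInt_Cmult, is_RInt_RtoC].
Qed.

Lemma vseg_integral_affine (c l p : C) (x y0 y1 : R) :
  vseg_integral (fun w => c + l * (w - p))%C x y0 y1 =
  (RtoC (y1 - y0) * (c + l * (RtoC x - p)) + (l * Ci) * RtoC ((y1 * y1 - y0 * y0) / 2))%C.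
Proof.
  apply (is_RInt_unique (V:=CR)).
  apply (is_RInt_ext (fun s => (c + l * (RtoC x - p)) + (l * Ci) * RtoC s)%C).
  - intros s _. rewrite pair_as_RtoC. change (@eq C (c + l * (RtoC x - p) + l * Ci * RtoC s)%C
      (c + l * (RtoC x + Ci * RtoC s - p))%C). ring.
  - apply (is_RInt_plus (V:=CR)); [apply is_RInt_Cconst | apply is_RInt_Cmult, is_RInt_RtoC].
Qed.

Lemma rect_integral_affine (c l p : C) (x0 x1 y0 y1 : R) :
  rect_integral (fun w => c + l * (w - p))%C x0 x1 y0 y1 = 0%C.
Proof.
  unfold rect_integral. rewrite !hseg_integral_affine, !vseg_integral_affine.
  destruct c, l, p. apply injective_projections; simpl; field.
Qed.

(** * Goursat's theorem *)

Lemma Cmod_rect_integral_le_linear_approx (f : C -> C) (l p : C) (eps x0 x1 y0 y1 : R) :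
  0 < eps -> x0 <= Re p <= x1 -> y0 <= Im p <= y1 -> on_rect (C_continuous f) x0 x1 y0 y1 ->
  on_rect (fun w => Cmod (f w - f p - l * (w - p))%C <= eps * Cmod (w - p)%C) x0 x1 y0 y1 ->
  Cmod (rect_integral f x0 x1 y0 y1) <= 2 * eps * ((x1 - x0) + (y1 - y0)) ^ 2.
Proof.
  intros Heps Hpx Hpy Hc Happrox.
  assert (Hx : x0 <= x1) by lra. assert (Hy : y0 <= y1) by lra.
  set (A := fun w => (f p + l * (w - p))%C).
  assert (HA : forall w, C_continuous A w)
    by (intros w; apply holomorphic_continuous, holomorphic_affine).
  assert (E : rect_integral f x0 x1 y0 y1 = rect_integral (fun w => f w - A w)%C x0 x1 y0 y1).
  { rewrite rect_integral_minus; try lra.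
    - unfold A. rewrite rect_integral_affine. ring.
    - apply (on_rect_boundary_sub _ x0 x1 y0 y1); lra || exact Hc.
    - split; intros s Hs; split; apply HA. }
  rewrite E.
  assert (Hcd : on_rect_boundary (C_continuous (fun w => f w - A w)%C) x0 x1 y0 y1).
  { apply (on_rect_boundary_sub _ x0 x1 y0 y1); try lra.
    intros u v Hu Hv. apply C_continuous_minus; [apply Hc; assumption | apply HA]. }
  eapply Rle_trans;
    [apply (Cmod_rect_integral_le _ x0 x1 y0 y1 Hx Hy Hcd (eps * ((x1 - x0) + (y1 - y0))))|].
  - apply (on_rect_boundary_sub _ x0 x1 y0 y1); try lra. intros u v Hu Hv.
    assert (Hd : Cmod ((u, v) - p)%C <= (x1 - x0) + (y1 - y0)).
    { eapply Rle_trans; [apply Cmod_le_Rabs_Re_Im|]. destruct p as [px py]; simpl in *.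
      assert (Rabs (u + - px) <= x1 - x0) by (apply Rabs_le; lra).
      assert (Rabs (v + - py) <= y1 - y0) by (apply Rabs_le; lra). lra. }
    unfold A. replace (f (u, v) - (f p + l * ((u, v) - p)))%C
      with (f (u, v) - f p - l * ((u, v) - p))%C by ring.
    eapply Rle_trans; [apply Happrox; assumption|]. apply Rmult_le_compat_l; lra.
  - right. ring.
Qed.

Record rect := Rect { rx0 : R; rx1 : R; ry0 : R; ry1 : R }.

Definition rect_wf (r : rect) : Prop := rx0 r <= rx1 r /\ ry0 r <= ry1 r.

Definition subrect (r' r : rect) : Prop :=
  rx0 r <= rx0 r' /\ rx1 r' <= rx1 r /\ ry0 r <= ry0 r' /\ ry1 r' <= ry1 r.

Definition quarter (r : rect) (right top : bool) : rect :=
  let xm := (rx0 r + rx1 r) / 2 in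
  let ym := (ry0 r + ry1 r) / 2 in
  Rect (if right then xm else rx0 r) (if right then rx1 r else xm)
       (if top then ym else ry0 r) (if top then ry1 r else ym).

Section Bisection.

Variable f : C -> C.

Definition rect_integral_of (r : rect) : C := rect_integral f (rx0 r) (rx1 r) (ry0 r) (ry1 r).

Definition bisect (r : rect) : rect :=
  let c := Cmod (rect_integral_of r) / 4 in
  if Rle_dec c (Cmod (rect_integral_of (quarter r false false))) then quarter r false false
  else if Rle_dec c (Cmod (rect_integral_of (quarter r true false))) then quarter r true false
  else if Rle_dec c (Cmod (rect_integral_of (quarter r false true))) then quarter r false true
  else quarter r true true.

Lemma bisect_spec (r : rect) : rect_wf r ->
  rect_wf (bisect r) /\ subrect (bisect r) r /\
  rx1 (bisect r) - rx0 (bisect r) = (rx1 r - rx0 r) / 2 /\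
  ry1 (bisect r) - ry0 (bisect r) = (ry1 r - ry0 r) / 2.
Proof.
  intros [Hx Hy]. unfold bisect, rect_wf, subrect.
  repeat destruct Rle_dec; simpl; lra.
Qed.

Lemma bisect_J (r : rect) : rect_wf r ->
  on_rect (C_continuous f) (rx0 r) (rx1 r) (ry0 r) (ry1 r) ->
  Cmod (rect_integral_of r) / 4 <= Cmod (rect_integral_of (bisect r)).
Proof.
  intros [Hx Hy] Hc. unfold bisect.
  destruct Rle_dec as [E1|E1]; [exact E1|].
  destruct Rle_dec as [E2|E2]; [exact E2|].
  destruct Rle_dec as [E3|E3]; [exact E3|].
  unfold rect_integral_of in *. simpl in *.
  rewrite (rect_integral_quarters f _ _ _ _ Hx Hy Hc) in *.
  set (A := rect_integral f (rx0 r) _ (ry0 r) _) in *.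
  set (B := rect_integral f _ (rx1 r) (ry0 r) _) in *.
  set (D := rect_integral f (rx0 r) _ _ (ry1 r)) in *.
  set (E := rect_integral f _ (rx1 r) _ (ry1 r)) in *.
  pose proof (Cmod_triangle (A + B + D) E).
  pose proof (Cmod_triangle (A + B) D).
  pose proof (Cmod_triangle A B).
  lra.
Qed.

Fixpoint bisections (r : rect) (k : nat) : rect :=
  match k with O => r | S k => bisect (bisections r k) end.

Lemma bisections_spec (r : rect) (k : nat) : rect_wf r ->
  rect_wf (bisections r k) /\ subrect (bisections r k) r /\
  rx1 (bisections r k) - rx0 (bisections r k) = (rx1 r - rx0 r) * (/ 2) ^ k /\
  ry1 (bisections r k) - ry0 (bisections r k) = (ry1 r - ry0 r) * (/ 2) ^ k.
Proof.
  intros Hr. induction k as [|k IH]; simpl.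
  - unfold subrect. destruct Hr. repeat split; lra.
  - destruct IH as (Hwf & Hsub & Hw & Hh).
    destruct (bisect_spec _ Hwf) as (Hwf' & Hsub' & Hw' & Hh').
    unfold subrect in *. repeat split; try tauto; lra.
Qed.

Lemma bisections_add (r : rect) (k d : nat) :
  bisections r (k + d) = bisections (bisections r k) d.
Proof.
  induction d as [|d IH]; simpl; [now rewrite Nat.add_0_r|].
  now rewrite Nat.add_succ_r, <- IH.
Qed.

Lemma bisections_common_point (r : rect) : rect_wf r -> exists p : C, forall k,
  rx0 (bisections r k) <= Re p <= rx1 (bisections r k) /\
  ry0 (bisections r k) <= Im p <= ry1 (bisections r k).
Proof.
  intros Hr.
  assert (Hcross : forall k j, subrect (bisections r (max k j)) (bisections r k)
                               /\ rect_wf (bisections r (max k j))).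
  { intros k j. replace (max k j) with (k + (max k j - k))%nat by lia.
    rewrite bisections_add.
    destruct (bisections_spec (bisections r k) (max k j - k)) as (Hwf & Hsub & _);
      [exact (proj1 (bisections_spec r k Hr)) | tauto]. }
  destruct (nested_intervals (fun k => rx0 (bisections r k)) (fun k => rx1 (bisections r k)))
    as [px Hpx].
  { intros k j. destruct (Hcross k j) as [Hk [Hwf _]], (Hcross j k) as [Hj _].
    rewrite Nat.max_comm in Hj. unfold subrect in *. lra. }
  destruct (nested_intervals (fun k => ry0 (bisections r k)) (fun k => ry1 (bisections r k)))
    as [py Hpy].
  { intros k j. destruct (Hcross k j) as [Hk [_ Hwf]], (Hcross j k) as [Hj _].
    rewrite Nat.max_comm in Hj. unfold subrect in *. lra. }
  exists (px, py). intros k. exact (conj (Hpx k) (Hpy k)).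
Qed.

Lemma bisections_J (r : rect) (k : nat) : rect_wf r ->
  on_rect (C_continuous f) (rx0 r) (rx1 r) (ry0 r) (ry1 r) ->
  Cmod (rect_integral_of r) * (/ 4) ^ k <= Cmod (rect_integral_of (bisections r k)).
Proof.
  intros Hr Hc. induction k as [|k IH]; simpl; [lra|].
  destruct (bisections_spec r k Hr) as (Hwf & Hsub & _).
  eapply Rle_trans; [|apply bisect_J; [exact Hwf|]].
  - lra.
  - unfold subrect in Hsub. apply (on_rect_sub _ (rx0 r) (rx1 r) (ry0 r) (ry1 r)); tauto || lra.
Qed.

End Bisection.

Theorem Goursat (f : C -> C) (x0 x1 y0 y1 : R) : x0 <= x1 -> y0 <= y1 ->
  on_rect (holomorphic f) x0 x1 y0 y1 -> rect_integral f x0 x1 y0 y1 = 0%C.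
Proof.
  intros Hx Hy H.
  set (r := Rect x0 x1 y0 y1). assert (Hr : rect_wf r) by (split; simpl; lra).
  assert (Hc : on_rect (C_continuous f) x0 x1 y0 y1)
    by (apply (on_rect_impl (holomorphic f)); [apply holomorphic_continuous | exact H]).
  destruct (bisections_common_point f r Hr) as [p Hp].
  destruct (Hp O) as [Hpx Hpy]; simpl in Hpx, Hpy.
  destruct (holomorphic_linear_approx f p) as [l Hl].
  { destruct p as [px py]. apply H; assumption. }
  (* On the k-th bisection s, of relative size q = 2^-k, f is eps-close to its
     tangent at p, so |J(r)| q^2 <= |J(s)| <= 2 eps (a + b)^2 q^2 for the
     contour integrals J. *)
  set (a := x1 - x0). set (b := y1 - y0).
  apply Cmod_eq_0, Rle_antisym; [|apply Cmod_ge_0].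
  apply (le_0_of_forall_le_eps_mul _ (2 * (a + b) ^ 2)). intros eps Heps.
  destruct (Hl eps Heps) as (d & Hd & Happrox).
  destruct (exists_mul_pow_half_lt (a + b) d Hd) as [k Hk].
  destruct (bisections_spec f r k Hr) as (Hwf & Hsub & Hw & Hh).
  destruct (Hp k) as [Hpxk Hpyk].
  pose proof (bisections_J f r k Hr Hc) as HJ.
  replace ((/ 4) ^ k) with ((/ 2) ^ k * (/ 2) ^ k) in HJ
    by (rewrite <- Rpow_mult_distr; f_equal; field).
  assert (Hq : 0 < (/ 2) ^ k) by (apply pow_lt; lra).
  set (s := bisections f r k) in *. set (q := (/ 2) ^ k) in *. clearbody s q.
  simpl in Hw, Hh. fold a b in Hw, Hh. unfold subrect in Hsub; simpl in Hsub.
  assert (Hs : Cmod (rect_integral_of f s) <= 2 * eps * ((a + b) * q) ^ 2).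
  { replace ((a + b) * q) with ((rx1 s - rx0 s) + (ry1 s - ry0 s)) by lra.
    unfold rect_integral_of.
    apply (Cmod_rect_integral_le_linear_approx f l p eps (rx0 s) (rx1 s) (ry0 s) (ry1 s));
      [exact Heps | exact Hpxk | exact Hpyk | |].
    - apply (on_rect_sub _ x0 x1 y0 y1); [lra .. | exact Hc].
    - intros u v Hu Hv. apply Happrox.
      eapply Rle_lt_trans; [apply Cmod_le_Rabs_Re_Im|]. destruct p as [px py]; simpl in *.
      assert (Rabs (u + - px) <= a * q) by (apply Rabs_le; lra).
      assert (Rabs (v + - py) <= b * q) by (apply Rabs_le; lra). lra. }
  apply Rmult_le_reg_r with (q * q); [apply Rmult_lt_0_compat; exact Hq|].
  eapply Rle_trans; [exact HJ|]. eapply Rle_trans; [exact Hs|]. right. ring.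
Qed.

(** * Cauchy's formula and the maximum principle *)

Lemma exists_square_inside (x0 x1 y0 y1 tx ty d : R) :
  x0 < tx < x1 -> y0 < ty < y1 -> 0 < d -> exists dl, 0 < dl /\ dl <= d /\
  x0 < tx - dl /\ tx + dl < x1 /\ y0 < ty - dl /\ ty + dl < y1.
Proof.
  intros Hx Hy Hd.
  set (m := Rmin (Rmin (tx - x0) (x1 - tx)) (Rmin (ty - y0) (y1 - ty))).
  assert (Hm : 0 < m /\ m <= tx - x0 /\ m <= x1 - tx /\ m <= ty - y0 /\ m <= y1 - ty).
  { unfold m.
    pose proof (Rmin_l (Rmin (tx - x0) (x1 - tx)) (Rmin (ty - y0) (y1 - ty))).
    pose proof (Rmin_r (Rmin (tx - x0) (x1 - tx)) (Rmin (ty - y0) (y1 - ty))).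
    pose proof (Rmin_l (tx - x0) (x1 - tx)). pose proof (Rmin_r (tx - x0) (x1 - tx)).
    pose proof (Rmin_l (ty - y0) (y1 - ty)). pose proof (Rmin_r (ty - y0) (y1 - ty)).
    split; [repeat apply Rmin_glb_lt; lra | lra]. }
  exists (Rmin d (m / 2)).
  pose proof (Rmin_l d (m / 2)). pose proof (Rmin_r d (m / 2)).
  assert (0 < Rmin d (m / 2)) by (apply Rmin_glb_lt; lra).
  lra.
Qed.

Lemma rect_integral_excise (f : C -> C) (x0 x1 y0 y1 tx ty dl : R) :
  0 < dl -> x0 < tx - dl -> tx + dl < x1 -> y0 < ty - dl -> ty + dl < y1 ->
  on_rect (fun w => w <> (tx, ty) -> holomorphic f w) x0 x1 y0 y1 ->
  rect_integral f x0 x1 y0 y1 = rect_integral f (tx - dl) (tx + dl) (ty - dl) (ty + dl).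
Proof.
  intros Hdl H1 H2 H3 H4 H.
  assert (Hcont : forall a0 a1 b0 b1, x0 <= a0 <= a1 -> a1 <= x1 -> y0 <= b0 <= b1 -> b1 <= y1 ->
            tx <> a0 -> tx <> a1 -> ty <> b0 -> ty <> b1 ->
            on_rect_boundary (C_continuous f) a0 a1 b0 b1).
  { intros. apply (on_rect_boundary_avoiding _ (tx, ty) x0 x1 y0 y1); simpl; try lra.
    revert H. apply on_rect_impl. intros w Hw Hne. apply holomorphic_continuous, Hw, Hne. }
  assert (Hzero : forall a0 a1 b0 b1, x0 <= a0 <= a1 -> a1 <= x1 -> y0 <= b0 <= b1 -> b1 <= y1 ->
            tx < a0 \/ a1 < tx \/ ty < b0 \/ b1 < ty -> rect_integral f a0 a1 b0 b1 = 0%C).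
  { intros. apply Goursat; try lra.
    apply (on_rect_avoiding _ (tx, ty) x0 x1 y0 y1); simpl; [lra .. | exact H]. }
  rewrite (rect_integral_splitX f x0 (tx - dl) x1 y0 y1),
    (rect_integral_splitX f (tx - dl) (tx + dl) x1 y0 y1),
    (rect_integral_splitY f (tx - dl) (tx + dl) y0 (ty - dl) y1),
    (rect_integral_splitY f (tx - dl) (tx + dl) (ty - dl) (ty + dl) y1),
    (Hzero x0 (tx - dl) y0 y1), (Hzero (tx + dl) x1 y0 y1),
    (Hzero (tx - dl) (tx + dl) y0 (ty - dl)), (Hzero (tx - dl) (tx + dl) (ty + dl) y1).
  - ring.
  all: lra || (apply Hcont; lra).
Qed.

Lemma rect_integral_punctured_eq_0 (f : C -> C) (x0 x1 y0 y1 tx ty d K : R) :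
  x0 < tx < x1 -> y0 < ty < y1 -> 0 < d ->
  on_rect (fun w => w <> (tx, ty) -> holomorphic f w) x0 x1 y0 y1 ->
  (forall u v, Rabs (u - tx) <= d -> Rabs (v - ty) <= d -> (u, v) <> (tx, ty) ->
     Cmod (f (u, v)) <= K) ->
  rect_integral f x0 x1 y0 y1 = 0%C.
Proof.
  intros Hx Hy Hd H Hbound.
  assert (HK : 0 <= K).
  { eapply Rle_trans; [apply Cmod_ge_0 | apply (Hbound (tx + d) ty)].
    - replace (tx + d - tx) with d by ring. rewrite Rabs_right; lra.
    - rewrite Rminus_diag, Rabs_R0. lra.
    - intros E. injection E. lra. }
  apply Cmod_eq_0, Rle_antisym; [|apply Cmod_ge_0].
  apply (le_0_of_forall_le_eps_mul _ (8 * K)). intros eps Heps.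
  destruct (exists_square_inside x0 x1 y0 y1 tx ty (Rmin eps d))
    as (dl & Hdl & Hdle & H1 & H2 & H3 & H4);
    [assumption | assumption | apply Rmin_glb_lt; assumption |].
  assert (Hdl_eps : dl <= eps) by (pose proof (Rmin_l eps d); lra).
  assert (Hdl_d : dl <= d) by (pose proof (Rmin_r eps d); lra).
  rewrite (rect_integral_excise f x0 x1 y0 y1 tx ty dl) by assumption.
  eapply Rle_trans; [apply (Cmod_rect_integral_le f (tx - dl) (tx + dl) (ty - dl) (ty + dl))
                      with (M := K); [lra | lra | |] | nra].
  - apply (on_rect_boundary_avoiding _ (tx, ty) x0 x1 y0 y1); simpl; try lra.
    revert H. apply on_rect_impl. intros w Hw Hne. apply holomorphic_continuous, Hw, Hne.
  - split; intros s Hs; split; apply Hbound; try (apply Rabs_le; lra);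
      intros E; injection E; lra.
Qed.

Lemma difference_quotient_bounded (h : C -> C) (t : C) : holomorphic h t ->
  exists d K, 0 < d /\ forall w, Cmod (w - t)%C < d -> w <> t ->
    Cmod ((h w - h t) / (w - t))%C <= K.
Proof.
  intros Hh. destruct (holomorphic_linear_approx h t Hh) as [l Hl].
  destruct (Hl 1 Rlt_0_1) as (d & Hd & Happrox).
  exists d, (Cmod l + 1). split; [exact Hd|]. intros w Hw Hne.
  pose proof (Cminus_eq_contra _ _ Hne) as Hw0.
  assert (Hpos : 0 < Cmod (w - t)%C) by (apply Cmod_gt_0, Hw0).
  rewrite Cmod_div by exact Hw0. apply Rle_div_l; [exact Hpos|].
  replace (h w - h t)%C with ((h w - h t - l * (w - t)) + l * (w - t))%C by ring.
  eapply Rle_trans; [apply Cmod_triangle|]. rewrite Cmod_mult.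
  specialize (Happrox w Hw). lra.
Qed.

Lemma rect_integral_Cauchy (h : C -> C) (x0 x1 y0 y1 tx ty : R) :
  x0 < tx < x1 -> y0 < ty < y1 -> on_rect (holomorphic h) x0 x1 y0 y1 ->
  rect_integral (fun w => h w * / (w - (tx, ty)))%C x0 x1 y0 y1 =
  (h (tx, ty) * rect_integral (fun w => / (w - (tx, ty)))%C x0 x1 y0 y1)%C.
Proof.
  intros Hx Hy H. set (t := ((tx, ty) : C)).
  set (q := fun w => (h w * / (w - t) - h t * / (w - t))%C).
  assert (Hkernel : forall w, w <> t -> holomorphic (fun w => / (w - t))%C w)
    by (intros w; apply holomorphic_Cauchy_kernel).
  assert (Hq : on_rect (fun w => w <> t -> holomorphic q w) x0 x1 y0 y1).
  { intros u v Hu Hv Hne. unfold q.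
    apply holomorphic_minus; apply holomorphic_mult;
      [apply H; assumption | apply Hkernel, Hne | apply holomorphic_const | apply Hkernel, Hne]. }
  assert (Hboundary : forall g, on_rect (fun w => w <> t -> holomorphic g w) x0 x1 y0 y1 ->
            on_rect_boundary (C_continuous g) x0 x1 y0 y1).
  { intros g Hg. apply (on_rect_boundary_avoiding _ t x0 x1 y0 y1); simpl; try lra.
    revert Hg. apply on_rect_impl. intros w Hw Hne. apply holomorphic_continuous, Hw, Hne. }
  assert (Hq0 : rect_integral q x0 x1 y0 y1 = 0%C).
  { destruct (difference_quotient_bounded h t) as (d & K & Hd & Hbound); [apply H; lra|].
    apply (rect_integral_punctured_eq_0 q x0 x1 y0 y1 tx ty (d / 4) K); try lra; [exact Hq|].
    intros u v Hu Hv Hne.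
    pose proof (Cminus_eq_contra _ _ Hne) as Hw0. fold t in Hw0.
    replace (q (u, v)) with ((h (u, v) - h t) / ((u, v) - t))%C
      by (unfold q; field; exact Hw0).
    apply Hbound; [|exact Hne].
    eapply Rle_lt_trans; [apply Cmod_le_Rabs_Re_Im|]. unfold t; simpl. unfold Rminus in *. lra. }
  rewrite <- (rect_integral_Cmult (fun w => / (w - t))%C) by
    (lra || apply Hboundary; intros u v _ _; apply Hkernel).
  assert (Hsplit : rect_integral q x0 x1 y0 y1 =
    (rect_integral (fun w => h w * / (w - t)) x0 x1 y0 y1
     - rect_integral (fun w => h t * / (w - t)) x0 x1 y0 y1)%C).
  { apply rect_integral_minus; try lra; apply Hboundary; intros u v Hu Hv Hne;
      apply holomorphic_mult; [apply H; assumption | apply Hkernel, Hne |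
                               apply holomorphic_const | apply Hkernel, Hne]. }
  rewrite Hq0 in Hsplit. apply Ceq_minus. symmetry. exact Hsplit.
Qed.

Lemma Re_Cinv_pos (c : R) (z : C) : 0 < c * Re z -> 0 < c * Re (/ z)%C.
Proof.
  destruct z as [a b]; simpl. intros H.
  assert (Ha : a <> 0) by (intros ->; lra). pose proof (Rsqr_pos_lt a Ha). unfold Rsqr in *.
  unfold Rdiv. rewrite <- Rmult_assoc. apply Rmult_lt_0_compat; [exact H|].
  apply Rinv_0_lt_compat. nra.
Qed.

Lemma Im_Cinv_pos (c : R) (z : C) : c * Im z < 0 -> 0 < c * Im (/ z)%C.
Proof.
  destruct z as [a b]; simpl. intros H.
  assert (Hb : b <> 0) by (intros ->; lra). pose proof (Rsqr_pos_lt b Hb). unfold Rsqr in *.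
  unfold Rdiv. rewrite <- Rmult_assoc. apply Rmult_lt_0_compat; [lra|].
  apply Rinv_0_lt_compat. nra.
Qed.

Lemma Im_rect_integral_Cauchy_kernel_pos (x0 x1 y0 y1 tx ty : R) :
  x0 < tx < x1 -> y0 < ty < y1 ->
  0 < Im (rect_integral (fun w => / (w - (tx, ty)))%C x0 x1 y0 y1).
Proof.
  intros Hx Hy. set (g := fun w => (/ (w - (tx, ty)))%C).
  assert (Hh : forall a b, x0 <= a <= x1 -> b <> ty ->
            @continuous R_UniformSpace CR (fun u => g (u, b)) a).
  { intros a b Ha Hb. apply continuous_hslice, holomorphic_continuous, holomorphic_Cauchy_kernel.
    intros E. injection E. lra. }
  assert (Hv : forall a b, y0 <= b <= y1 -> a <> tx ->
            @continuous R_UniformSpace CR (fun v => g (a, v)) b).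
  { intros a b Hb Ha. apply continuous_vslice, holomorphic_continuous, holomorphic_Cauchy_kernel.
    intros E. injection E. lra. }
  assert (Hbottom : 0 < 1 * Im (hseg_integral g y0 x0 x1)).
  { apply RInt_C_Im_pos; [lra | intros s Hs; apply Hh; lra |].
    intros s Hs. apply Im_Cinv_pos. simpl. lra. }
  assert (Hright : 0 < 1 * Re (vseg_integral g x1 y0 y1)).
  { apply RInt_C_Re_pos; [lra | intros s Hs; apply Hv; lra |].
    intros s Hs. apply Re_Cinv_pos. simpl. lra. }
  assert (Htop : 0 < -1 * Im (hseg_integral g y1 x0 x1)).
  { apply RInt_C_Im_pos; [lra | intros s Hs; apply Hh; lra |].
    intros s Hs. apply Im_Cinv_pos. simpl. lra. }
  assert (Hleft : 0 < -1 * Re (vseg_integral g x0 y0 y1)).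
  { apply RInt_C_Re_pos; [lra | intros s Hs; apply Hv; lra |].
    intros s Hs. apply Re_Cinv_pos. simpl. lra. }
  unfold rect_integral. fold g.
  destruct (hseg_integral g y0 x0 x1), (vseg_integral g x1 y0 y1),
    (hseg_integral g y1 x0 x1), (vseg_integral g x0 y0 y1).
  simpl in *. lra.
Qed.

Lemma rect_boundary_dist_ge (x0 x1 y0 y1 tx ty m : R) : 0 <= m ->
  x0 <= tx - m -> tx + m <= x1 -> y0 <= ty - m -> ty + m <= y1 ->
  on_rect_boundary (fun w => m <= Cmod (w - (tx, ty))%C) x0 x1 y0 y1.
Proof.
  intros Hm H1 H2 H3 H4.
  split; intros s Hs; split;
    solve [ eapply Rle_trans; [|apply Rabs_Im_le_Cmod]; simpl;
            first [rewrite Rabs_left1 by lra | rewrite Rabs_right by lra]; lra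
          | eapply Rle_trans; [|apply re_le_Cmod]; simpl;
            first [rewrite Rabs_left1 by lra | rewrite Rabs_right by lra]; lra ].
Qed.

Lemma Cmod_rect_integral_pow_kernel_le (f : C -> C) (x0 x1 y0 y1 tx ty K m : R) (k : nat) :
  x0 <= x1 -> y0 <= y1 -> 0 < m ->
  on_rect_boundary (fun w => holomorphic f w /\ Cmod (f w) <= K /\ m <= Cmod (w - (tx, ty))%C)
    x0 x1 y0 y1 ->
  Cmod (rect_integral (fun w => Cpow (f w) k * / (w - (tx, ty)))%C x0 x1 y0 y1)
  <= 2 * (x1 - x0) * (K ^ k / m) + 2 * (y1 - y0) * (K ^ k / m).
Proof.
  intros Hx Hy Hm H. apply Cmod_rect_integral_le; [exact Hx | exact Hy | |];
    revert H; apply on_rect_boundary_impl; intros w (Hw & Hfw & Hdw).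
  - assert (Hne : w <> (tx, ty))
      by (intros ->; rewrite (proj1 (Ceq_minus _ _) eq_refl), Cmod_0 in Hdw; lra).
    apply holomorphic_continuous, holomorphic_mult;
      [apply holomorphic_pow, Hw | apply holomorphic_Cauchy_kernel, Hne].
  - apply Cmod_div_le; [exact Hm | exact Hdw |]. rewrite Cmod_pow.
    apply pow_incr. split; [apply Cmod_ge_0 | exact Hfw].
Qed.

Theorem rect_maximum_modulus (f : C -> C) (x0 x1 y0 y1 tx ty K : R) :
  x0 < tx < x1 -> y0 < ty < y1 -> on_rect (holomorphic f) x0 x1 y0 y1 ->
  on_rect_boundary (fun w => Cmod (f w) <= K) x0 x1 y0 y1 ->
  Cmod (f (tx, ty)) <= K.
Proof.
  intros Hx Hy H Hbound.
  assert (HK : 0 <= K)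
    by (eapply Rle_trans; [apply Cmod_ge_0 | apply (proj1 Hbound x0); lra]).
  set (I := rect_integral (fun w => / (w - (tx, ty)))%C x0 x1 y0 y1).
  assert (HI : 0 < Cmod I).
  { pose proof (Im_rect_integral_Cauchy_kernel_pos x0 x1 y0 y1 tx ty Hx Hy) as HIm.
    eapply Rlt_le_trans; [|apply Rabs_Im_le_Cmod]. apply Rabs_pos_lt. fold I in HIm. lra. }
  destruct (exists_square_inside x0 x1 y0 y1 tx ty 1) as (m & Hm & _ & H1 & H2 & H3 & H4);
    [assumption | assumption | lra |].
  assert (Hbd : on_rect_boundary
            (fun w => holomorphic f w /\ Cmod (f w) <= K /\ m <= Cmod (w - (tx, ty))%C)
            x0 x1 y0 y1).
  { repeat apply on_rect_boundary_conj; [| exact Hbound | apply rect_boundary_dist_ge; lra].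
    apply (on_rect_boundary_sub _ x0 x1 y0 y1); [lra .. | exact H]. }
  (* Landau's trick: Cauchy's formula bounds |f (tx, ty)|^k |I| by a constant times K^k. *)
  apply (le_of_forall_pow_le_mul_pow _ _ ((2 * (x1 - x0) + 2 * (y1 - y0)) / (m * Cmod I)));
    [apply Cmod_ge_0 | exact HK |].
  intros k.
  pose proof (Cmod_rect_integral_pow_kernel_le f x0 x1 y0 y1 tx ty K m k
                ltac:(lra) ltac:(lra) Hm Hbd) as Hle.
  rewrite (rect_integral_Cauchy (fun w => Cpow (f w) k)), Cmod_mult, Cmod_pow in Hle;
    [| assumption | assumption |
     revert H; apply on_rect_impl; intros w Hw; apply holomorphic_pow, Hw].
  fold I in Hle. apply Rmult_le_reg_r with (Cmod I); [exact HI|].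
  replace ((2 * (x1 - x0) + 2 * (y1 - y0)) / (m * Cmod I) * K ^ k * Cmod I)
    with (2 * (x1 - x0) * (K ^ k / m) + 2 * (y1 - y0) * (K ^ k / m)) by (field; lra).
  exact Hle.
Qed.

(** * The Phragmen-Lindelof bound on a strip *)

Lemma damping_denominator_eq (e t u v : R) :
  (1 - Ci * RtoC e * ((u, v) - RtoC t))%C = (1 + e * v, - (e * (u - t))) :> C.
Proof. apply injective_projections; simpl; ring. Qed.

Lemma holomorphic_damping (e t u v : R) : 1 + e * v <> 0 ->
  holomorphic (fun w => / (1 - Ci * RtoC e * (w - RtoC t)))%C (u, v).
Proof.
  intros Hv. apply (holomorphic_comp (fun z => / z)%C (fun w => 1 - Ci * RtoC e * (w - RtoC t))%C).
  - apply holomorphic_minus; [apply holomorphic_const|].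
    apply holomorphic_mult; [apply holomorphic_const|].
    apply holomorphic_minus; [apply holomorphic_id | apply holomorphic_const].
  - apply holomorphic_Cinv. rewrite damping_denominator_eq. intros E. injection E. lra.
Qed.

Section Strip.

Variables (G : C -> C) (y M B c d : R).
Hypotheses (Hy : 0 < y) (HM : 0 < M).
Hypothesis HG : forall u v, Rabs v <= y -> holomorphic G (u, v).
Hypothesis Hedges : forall u v, Rabs v = y -> Cmod (G (u, v)) <= M.
Hypothesis Houter : forall u v, Rabs v <= y -> u <= c \/ d <= u -> Cmod (G (u, v)) <= B.

Lemma exists_strip_length (t e : R) : 0 < e ->
  exists L, 1 <= L /\ (t - L <= c /\ d <= t + L) /\ B <= e * M * L.
Proof.
  intros He. exists (Rabs (t - c) + Rabs (d - t) + Rabs B / (e * M) + 1).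
  pose proof (Rle_abs (t - c)). pose proof (Rle_abs (d - t)). pose proof (Rle_abs B).
  pose proof (Rabs_pos (t - c)). pose proof (Rabs_pos (d - t)).
  assert (0 <= Rabs B / (e * M)) by (apply Rdiv_le_0_compat; [apply Rabs_pos | nra]).
  assert (0 <= e * M * (Rabs (t - c) + Rabs (d - t) + 1))
    by (apply Rmult_le_pos; [apply Rmult_le_pos |]; lra).
  repeat split; try lra.
  replace (e * M * (Rabs (t - c) + Rabs (d - t) + Rabs B / (e * M) + 1))
    with (e * M * (Rabs (t - c) + Rabs (d - t) + 1) + Rabs B) by (field; lra).
  lra.
Qed.

(* On the rectangle [t - L, t + L] x [-y, y] the damping factor
   1 / (1 - i e (w - t)) has modulus at most 1 / (1 - e y) on the horizontal sides
   and at most 1 / (e L) on the vertical ones, where L is chosen with B <= e M L. *)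
Lemma strip_damped_bound (t e : R) : 0 < e -> e * y < 1 ->
  Cmod (G (t, 0)) <= M / (1 - e * y).
Proof.
  intros He Hey.
  destruct (exists_strip_length t e He) as (L & HL & HtL & HBL).
  assert (HMy : M <= M / (1 - e * y)).
  { apply Rmult_le_reg_r with (1 - e * y); [lra|].
    replace (M / (1 - e * y) * (1 - e * y)) with M by (field; lra).
    assert (0 <= M * (e * y)) by (apply Rmult_le_pos; nra). lra. }
  set (Psi := fun w => (G w * / (1 - Ci * RtoC e * (w - RtoC t)))%C).
  replace (G (t, 0)) with (Psi (t, 0)).
  2:{ unfold Psi. rewrite damping_denominator_eq.
      replace ((1 + e * 0), - (e * (t - t))) with (RtoC 1)
        by (apply injective_projections; simpl; ring).
      field. }
  apply (rect_maximum_modulus Psi (t - L) (t + L) (- y) y); [lra | lra | |].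
  - intros u v Hu Hv. unfold Psi. apply holomorphic_mult; [apply HG, Rabs_le; lra|].
    apply holomorphic_damping. nra.
  - split; intros s Hs; unfold Psi; rewrite !damping_denominator_eq; split.
    + apply Cmod_div_le; [lra | | apply Hedges; rewrite Rabs_Ropp, Rabs_right; lra].
      eapply Rle_trans; [|apply re_le_Cmod]. simpl. rewrite Rabs_right; nra.
    + apply Cmod_div_le; [lra | | apply Hedges; rewrite Rabs_right; lra].
      eapply Rle_trans; [|apply re_le_Cmod]. simpl. rewrite Rabs_right; nra.
    + eapply Rle_trans; [|exact HMy].
      replace M with (e * M * L / (e * L)) by (field; lra).
      apply Cmod_div_le; [nra | |].
      * eapply Rle_trans; [|apply Rabs_Im_le_Cmod]. simpl.
        replace (e * (t - L - t)) with (- (e * L)) by ring.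
        rewrite !Rabs_Ropp, Rabs_right; nra.
      * eapply Rle_trans; [|exact HBL]. apply Houter; [apply Rabs_le |]; lra.
    + eapply Rle_trans; [|exact HMy].
      replace M with (e * M * L / (e * L)) by (field; lra).
      apply Cmod_div_le; [nra | |].
      * eapply Rle_trans; [|apply Rabs_Im_le_Cmod]. simpl.
        replace (e * (t + L - t)) with (e * L) by ring.
        rewrite Rabs_Ropp, Rabs_right; nra.
      * eapply Rle_trans; [|exact HBL]. apply Houter; [apply Rabs_le |]; lra.
Qed.

Theorem strip_bound (t : R) : Cmod (G (RtoC t)) <= M.
Proof.
  set (X := Cmod (G (t, 0))).
  assert (HX : 0 <= X) by apply Cmod_ge_0.
  enough (X - M <= 0) by (change (RtoC t) with ((t, 0) : C); fold X; lra).
  apply (le_0_of_forall_le_eps_mul _ (y * X)). intros eps Heps.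
  set (e := Rmin eps (/ (2 * y))).
  assert (He : 0 < e) by (apply Rmin_glb_lt; [lra | apply Rinv_0_lt_compat; lra]).
  assert (He_eps : e <= eps) by apply Rmin_l.
  assert (Hey : e * y <= / 2).
  { replace (/ 2) with (/ (2 * y) * y) by (field; lra).
    apply Rmult_le_compat_r; [lra | apply Rmin_r]. }
  pose proof (strip_damped_bound t e He ltac:(lra)) as Hd. fold X in Hd.
  apply Rmult_le_compat_r with (r := 1 - e * y) in Hd; [|lra].
  replace (M / (1 - e * y) * (1 - e * y)) with M in Hd by (field; lra).
  assert (e * y * X <= eps * (y * X)) by (rewrite <- Rmult_assoc; apply Rmult_le_compat_r; nra).
  nra.
Qed.

End Strip.

Lemma Cmod_prod_lin_ge (x : nat -> R) (n : nat) (w : C) (c : R) : 0 <= c ->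
  (forall i, (i < n)%nat -> c <= Cmod (w - RtoC (x i))%C) -> c ^ n <= Cmod (prod_lin x n w).
Proof.
  intros Hc. induction n as [|n IH]; intros H; simpl; [rewrite Cmod_1; lra|].
  rewrite Cmod_mult, Rmult_comm.
  apply Rmult_le_compat; [apply pow_le, Hc | lra | | apply H; lia].
  apply IH. intros i Hi. apply H. lia.
Qed.

Lemma Cmod_prod_lin_le (x : nat -> R) (n : nat) (w : C) (c : R) :
  (forall i, (i < n)%nat -> Cmod (w - RtoC (x i))%C <= c) -> Cmod (prod_lin x n w) <= c ^ n.
Proof.
  induction n as [|n IH]; intros H; simpl; [rewrite Cmod_1; lra|].
  rewrite Cmod_mult, Rmult_comm.
  apply Rmult_le_compat; [apply Cmod_ge_0 | apply Cmod_ge_0 | apply H; lia |].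
  apply IH. intros i Hi. apply H. lia.
Qed.

Lemma Cmod_cofactor_le (F G : C -> C) (x : nat -> R) (n : nat) (w : C) (c K : R) :
  0 < c -> (forall z, F z = (G z * prod_lin x n z)%C) ->
  (forall i, (i < n)%nat -> c <= Cmod (w - RtoC (x i))%C) -> Cmod (F w) <= K ->
  Cmod (G w) <= K / c ^ n.
Proof.
  intros Hc HFG Hdist HF. rewrite HFG, Cmod_mult in HF.
  apply Rle_div_r; [apply pow_lt, Hc|].
  eapply Rle_trans; [|exact HF]. apply Rmult_le_compat_l; [apply Cmod_ge_0|].
  apply Cmod_prod_lin_ge; [lra | exact Hdist].
Qed.

Lemma exp_growth_le (sigma : R -> R) (v y : R) :
  (forall s t, 0 < s -> s <= t -> sigma s <= sigma t) -> Rabs v <= y ->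
  exp (Rabs v * sigma (Rabs v)) <= exp (y * Rabs (sigma y)).
Proof.
  intros Hmono Hv.
  assert (H : Rabs v * sigma (Rabs v) <= y * Rabs (sigma y)).
  { pose proof (Rle_abs (sigma y)). pose proof (Rabs_pos (sigma y)). pose proof (Rabs_pos v).
    destruct (Rle_lt_or_eq_dec 0 (Rabs v) (Rabs_pos v)) as [Hpos|<-].
    - pose proof (Hmono (Rabs v) y Hpos Hv).
      apply Rle_trans with (Rabs v * Rabs (sigma y));
        [apply Rmult_le_compat_l | apply Rmult_le_compat_r]; lra.
    - rewrite Rmult_0_l. apply Rmult_le_pos; lra. }
  destruct (Rle_lt_or_eq_dec _ _ H) as [Hlt | ->]; [left; apply exp_increasing, Hlt | lra].
Qed.

Theorem lemma3p4 (sigma : R -> R) (F : C -> C) (n : nat) (a b : R) (x : nat -> R) :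
  (forall s t : R, 0 < s -> s <= t -> sigma s <= sigma t) ->
  is_lim sigma p_infty p_infty ->
  entire F ->
  (forall z : C, Cmod (F z) <= exp (Rabs (Im z) * sigma (Rabs (Im z)))) ->
  (forall i : nat, (i < n)%nat -> a <= x i <= b) ->
  has_zeros F x n ->
  forall t : R, a <= t <= b ->
  forall y : R, 0 < y ->
  Cmod (F (RtoC t)) <= (b - a) ^ n * (exp (y * sigma y) / y ^ n).
Proof.
  intros Hmono _ _ HF Hx [G [HG HFG]] t Ht y Hy.
  assert (Hedges : forall u v, Rabs v = y -> Cmod (G (u, v)) <= exp (y * sigma y) / y ^ n).
  { intros u v Hv. apply (Cmod_cofactor_le F G x n); [exact Hy | exact HFG | |].
    - intros i _. eapply Rle_trans; [|apply Rabs_Im_le_Cmod]. simpl.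
      rewrite Ropp_0, Rplus_0_r. lra.
    - specialize (HF (u, v)). simpl in HF. rewrite Hv in HF. exact HF. }
  assert (Houter : forall u v, Rabs v <= y -> u <= a - 1 \/ b + 1 <= u ->
            Cmod (G (u, v)) <= exp (y * Rabs (sigma y))).
  { intros u v Hv Hu. rewrite <- (Rdiv_1_r (exp _)), <- (pow1 n).
    apply (Cmod_cofactor_le F G x n); [lra | exact HFG | |].
    - intros i Hi. eapply Rle_trans; [|apply re_le_Cmod]. simpl. destruct (Hx i Hi).
      destruct Hu; [rewrite Rabs_left1 | rewrite Rabs_right]; lra.
    - eapply Rle_trans; [apply HF | apply exp_growth_le; assumption]. }
  rewrite HFG, Cmod_mult, Rmult_comm.
  apply Rmult_le_compat; [apply Cmod_ge_0 | apply Cmod_ge_0 | |].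
  - apply Cmod_prod_lin_le. intros i Hi. destruct (Hx i Hi).
    rewrite <- RtoC_minus, Cmod_R. apply Rabs_le. lra.
  - apply (strip_bound G y _ (exp (y * Rabs (sigma y))) (a - 1) (b + 1)); try assumption.
    + apply Rdiv_lt_0_compat; [apply exp_pos | apply pow_lt, Hy].
    + intros u v _. apply HG.
Qed.
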